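(* There is an absolute constant $C>0$ such that for every instance with capacities $c_i\ge1$ and $c_{\min}=\min_{i\in I}c_i\ge2$, $$\mathrm{OPT}(\mathrm{LP})\Big(1-C\sqrt{\tfrac{\log c_{\min}}{c_{\min}}}\Big)\ \le\ \mathrm{OPT}(\mathrm{PBP})\ \le\ \mathrm{OPT}(\mathrm{LP}).$$ In particular $\mathrm{OPT}(\mathrm{PBP})/\mathrm{OPT}(\mathrm{LP})\to1$ as $c_{\min}\to\infty$.
   Context: Instance: bipartite graph $G=(I,T,E)$, rewards $r_i>0$ and integer capacities $c_i\ge1$ for $i\in I$, arrivals $t\in T$ ordered $1,2,\dots$, edge probabilities $p_{it}\in[0,1]$. Expectation LP: maximize $\sum_{(i,t)\in E}p_{it}r_ix_{it}$ subject to $\sum_tp_{it}x_{it}\le c_i$ for all $i$, $\sum_ix_{it}\le1$ for all $t$, $0\le x_{it}\le1$; its optimum is $\mathrm{OPT}(\mathrm{LP})$. Sample paths: $\omega$ assigns each edge an outcome $\mathbb{1}^\omega(i,t)\in\{0,1\}$, independent Bernoulli($p_{it}$); $\Omega$ is the set of all paths; $\omega_{t}$ is the restriction of $\omega$ to edges incident to arrivals $t'\le t$. PBP: variables $x^\omega_{it}\in[0,1]$; maximize $E_\omega\big[\sum_{(i,t)\in E}r_ix^\omega_{it}\mathbb{1}^\omega(i,t)\big]$ subject to $\sum_tx^\omega_{it}\mathbb{1}^\omega(i,t)\le c_i$ for all $i,\omega$; $\sum_ix^\omega_{it}\le1$ for all $t,\omega$; $x^\omega_{it}=x^{\omega'}_{it}$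 whenever $\omega_{t-1}=\omega'_{t-1}$. Its optimum is $\mathrm{OPT}(\mathrm{PBP})$. *)

From Stdlib Require Import Reals List Arith Bool.
Import ListNotations.
Open Scope R_scope.

(** An instance: resources I = {0..nI-1}, arrivals T = {0..nT-1} in arrival
    order, edge set given by the predicate E (restricted to I x T), rewards r,
    integer capacities c, edge probabilities p. *)
Record Instance := mkInstance {
  nI : nat;
  nT : nat;
  E  : nat -> nat -> bool;
  rew : nat -> R;
  cap : nat -> nat;
  prob : nat -> nat -> R
}.

Definition valid_instance (G : Instance) : Prop :=
  (1 <= nI G)%nat /\
  (forall i, (i < nI G)%nat -> 0 < rew G i) /\
  (forall i, (i < nI G)%nat -> (1 <= cap G i)%nat) /\
  (forall i t, (i < nI G)%nat -> (t < nT G)%nat -> E G i t = true ->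
     0 <= prob G i t <= 1).

Definition edges (G : Instance) : list (nat * nat) :=
  filter (fun e => E G (fst e) (snd e))
         (list_prod (seq 0 (nI G)) (seq 0 (nT G))).

Definition sumL {A : Type} (f : A -> R) (l : list A) : R :=
  fold_right (fun a acc => f a + acc) 0 l.

Definition prodL {A : Type} (f : A -> R) (l : list A) : R :=
  fold_right (fun a acc => f a * acc) 1 l.

Definition cmin (G : Instance) : nat :=
  match seq 0 (nI G) with
  | [] => 0%nat
  | i0 :: l => fold_left (fun m i => Nat.min m (cap G i)) l (cap G i0)
  end.

Definition LP_feasible (G : Instance) (x : nat -> nat -> R) : Prop :=
  (forall i, (i < nI G)%nat ->
     sumL (fun e => prob G (fst e) (snd e) * x (fst e) (snd e))
          (filter (fun e => Nat.eqb (fst e) i) (edges G)) <= INR (cap G i)) /\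
  (forall t, (t < nT G)%nat ->
     sumL (fun e => x (fst e) (snd e))
          (filter (fun e => Nat.eqb (snd e) t) (edges G)) <= 1) /\
  (forall e, In e (edges G) -> 0 <= x (fst e) (snd e) <= 1).

Definition LP_obj (G : Instance) (x : nat -> nat -> R) : R :=
  sumL (fun e => prob G (fst e) (snd e) * rew G (fst e) * x (fst e) (snd e))
       (edges G).

Definition OPT_LP (G : Instance) (v : R) : Prop :=
  is_lub (fun w => exists x, LP_feasible G x /\ w = LP_obj G x) v.

(** A sample path assigns an outcome to each edge; it is represented as a
    function nat -> nat -> bool equal to false off the edge set. *)
Definition upd (w : nat -> nat -> bool) (e : nat * nat) (b : bool)
  : nat -> nat -> bool :=
  fun i t => if Nat.eqb i (fst e) && Nat.eqb t (snd e) then b else w i t.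

Fixpoint allPaths (l : list (nat * nat)) : list (nat -> nat -> bool) :=
  match l with
  | [] => [fun _ _ => false]
  | e :: l' => flat_map (fun w => [upd w e true; upd w e false]) (allPaths l')
  end.

Definition Omega (G : Instance) : list (nat -> nat -> bool) := allPaths (edges G).

Definition path_prob (G : Instance) (w : nat -> nat -> bool) : R :=
  prodL (fun e => if w (fst e) (snd e) then prob G (fst e) (snd e)
                  else 1 - prob G (fst e) (snd e)) (edges G).

Definition ind (b : bool) : R := if b then 1 else 0.

Definition PBP_feasible (G : Instance)
    (x : (nat -> nat -> bool) -> nat -> nat -> R) : Prop :=
  (forall w, In w (Omega G) -> forall i, (i < nI G)%nat ->
     sumL (fun e => x w (fst e) (snd e) * ind (w (fst e) (snd e)))
          (filter (fun e => Nat.eqb (fst e) i) (edges G)) <= INR (cap G i)) /\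
  (forall w, In w (Omega G) -> forall t, (t < nT G)%nat ->
     sumL (fun e => x w (fst e) (snd e))
          (filter (fun e => Nat.eqb (snd e) t) (edges G)) <= 1) /\
  (forall w, In w (Omega G) -> forall e, In e (edges G) ->
     0 <= x w (fst e) (snd e) <= 1) /\
  (* non-anticipativity: x^w_it depends only on outcomes of edges incident
     to arrivals t' < t (i.e. omega_{t-1}) *)
  (forall w w', In w (Omega G) -> In w' (Omega G) ->
     forall e, In e (edges G) ->
     (forall e', In e' (edges G) -> (snd e' < snd e)%nat ->
        w (fst e') (snd e') = w' (fst e') (snd e')) ->
     x w (fst e) (snd e) = x w' (fst e) (snd e)).

Definition PBP_obj (G : Instance)
    (x : (nat -> nat -> bool) -> nat -> nat -> R) : R :=
  sumL (fun w => path_prob G w *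
          sumL (fun e => rew G (fst e) * x w (fst e) (snd e)
                          * ind (w (fst e) (snd e))) (edges G))
       (Omega G).

Definition OPT_PBP (G : Instance) (v : R) : Prop :=
  is_lub (fun w => exists x, PBP_feasible G x /\ w = PBP_obj G x) v.

(** Upper bound OPT(PBP) <= OPT(LP): averaging a feasible path-based solution
    x over the sample paths gives y = E[x], which is LP-feasible with the same
    objective.  The key fact is independence: by non-anticipativity x^w_{it}
    does not depend on the outcome of edge (i,t), so E[x_{it} 1(i,t)] =
    p_{it} E[x_{it}].

    Lower bound: given an LP solution y and q = sqrt c_min, scale it to
    a = (1 - 1/q) y and, on every path, serve the edges of each resource i in
    arrival order, clipping the cumulative consumption at c_i.  This policy is
    non-anticipating and feasible, and by telescoping resource i collects
    exactly min(S_i, c_i), where S_i = sum_t a_{it} 1(i,t).  A second-moment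
    argument (min(S,c) >= S - (S - mu)^2/(4 (c - mu)) and Var S <= E S) gives
    E[min(S_i, c_i)] >= (1 - 1/(4q)) E[S_i]; hence OPT(PBP) >= (1 - 1/(4q))
    (1 - 1/q) OPT(LP) >= (1 - 2 sqrt(ln c_min / c_min)) OPT(LP). *)

From Stdlib Require Import Reals Lra Lia List FunctionalExtensionality.
From Stdlib Require Import Sorting.Sorted.
Import ListNotations.
Open Scope R_scope.

Lemma sumL_ext {A} (f g : A -> R) l :
  (forall a, In a l -> f a = g a) -> sumL f l = sumL g l.
Proof. induction l; simpl; intros H; auto. rewrite H, IHl; auto. Qed.

Lemma sumL_plus {A} (f g : A -> R) l :
  sumL (fun a => f a + g a) l = sumL f l + sumL g l.
Proof. induction l; simpl; [lra|]. rewrite IHl; ring. Qed.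

Lemma sumL_scal {A} (f : A -> R) k l : sumL (fun a => k * f a) l = k * sumL f l.
Proof. induction l; simpl; [ring|]. rewrite IHl; ring. Qed.

Lemma sumL_scal_r {A} (f : A -> R) k l : sumL (fun a => f a * k) l = sumL f l * k.
Proof. induction l; simpl; [ring|]. rewrite IHl; ring. Qed.

Lemma sumL_zero {A} (l : list A) : sumL (fun _ => 0) l = 0.
Proof. induction l; simpl; [ring|]. rewrite IHl; ring. Qed.

Lemma sumL_le {A} (f g : A -> R) l :
  (forall a, In a l -> f a <= g a) -> sumL f l <= sumL g l.
Proof.
  induction l; simpl; intros H; [lra|].
  assert (f a <= g a) by auto. assert (sumL f l <= sumL g l) by auto. lra.
Qed.

Lemma sumL_nonneg {A} (f : A -> R) l : (forall a, In a l -> 0 <= f a) -> 0 <= sumL f l.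
Proof. intros H. rewrite <- (sumL_zero l). apply sumL_le; auto. Qed.

Lemma sumL_app {A} (f : A -> R) l1 l2 : sumL f (l1 ++ l2) = sumL f l1 + sumL f l2.
Proof. induction l1; simpl; [ring|]. rewrite IHl1; ring. Qed.

Lemma sumL_flat_map {A B} (f : B -> R) (g : A -> list B) l :
  sumL f (flat_map g l) = sumL (fun x => sumL f (g x)) l.
Proof. induction l; simpl; auto. rewrite sumL_app, IHl; auto. Qed.

Lemma sumL_exchange {A B} (F : A -> B -> R) la lb :
  sumL (fun a => sumL (fun b => F a b) lb) la = sumL (fun b => sumL (fun a => F a b) la) lb.
Proof.
  induction la; simpl.
  - rewrite sumL_zero; auto.
  - rewrite IHla, <- sumL_plus. auto.
Qed.

Lemma sum_delta {A} (dec : forall x y : A, {x = y} + {x <> y}) (h : A -> R) k l :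
  NoDup l -> In k l -> sumL (fun i => if dec i k then h i else 0) l = h k.
Proof.
  assert (Hout : forall l, ~ In k l -> sumL (fun i => if dec i k then h i else 0) l = 0).
  { induction l0 as [|a l0 IH]; simpl; intros Hn; auto.
    destruct (dec a k); [subst; tauto|]. rewrite IH by tauto. ring. }
  induction l as [|a l IH]; simpl; intros Hn Hk; [tauto|]. inversion Hn; subst.
  destruct (dec a k).
  - subst. rewrite Hout by auto. ring.
  - destruct Hk; [congruence|]. rewrite IH by auto. ring.
Qed.

Lemma prodL_ext {A} (f g : A -> R) l :
  (forall a, In a l -> f a = g a) -> prodL f l = prodL g l.
Proof. induction l; simpl; intros H; auto. rewrite H, IHl; auto. Qed.

Lemma prodL_nonneg {A} (f : A -> R) l : (forall a, In a l -> 0 <= f a) -> 0 <= prodL f l.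
Proof. induction l; simpl; intros H; [lra|]. apply Rmult_le_pos; auto. Qed.

(** ** Expectation over the sample paths of an edge list *)

Definition path_weight (p : nat -> nat -> R) (L : list (nat * nat))
    (w : nat -> nat -> bool) : R :=
  prodL (fun e => if w (fst e) (snd e) then p (fst e) (snd e)
                  else 1 - p (fst e) (snd e)) L.

Definition expect (p : nat -> nat -> R) (L : list (nat * nat))
    (f : (nat -> nat -> bool) -> R) : R :=
  sumL (fun w => path_weight p L w * f w) (allPaths L).

Definition supported_on (L : list (nat * nat)) (w : nat -> nat -> bool) : Prop :=
  forall i t, w i t = true -> In (i, t) L.

Definition pair_dec (x y : nat * nat) : {x = y} + {x <> y}.
Proof. decide equality; apply Nat.eq_dec. Defined.

Lemma upd_neq w e b e' : e' <> e -> upd w e b (fst e') (snd e') = w (fst e') (snd e').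
Proof.
  intros H. destruct e as [a c], e' as [a' c']; unfold upd; simpl.
  destruct (Nat.eqb_spec a' a), (Nat.eqb_spec c' c); simpl; auto. subst; congruence.
Qed.

Lemma upd_eq w e b : upd w e b (fst e) (snd e) = b.
Proof. unfold upd. rewrite !Nat.eqb_refl. auto. Qed.

Lemma upd_comm w e e0 b b0 : e <> e0 -> upd (upd w e b) e0 b0 = upd (upd w e0 b0) e b.
Proof.
  intros H. extensionality i. extensionality t. unfold upd.
  destruct e as [a c], e0 as [a0 c0]; simpl.
  destruct (Nat.eqb_spec i a0), (Nat.eqb_spec t c0), (Nat.eqb_spec i a), (Nat.eqb_spec t c);
    simpl; auto; subst; congruence.
Qed.

Lemma upd_supported L w e b : In e L -> supported_on L w -> supported_on L (upd w e b).
Proof.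
  intros He Hw i t. unfold upd. destruct e as [a c]; simpl.
  destruct (Nat.eqb_spec i a), (Nat.eqb_spec t c); simpl; intros H; subst; auto.
Qed.

Lemma allPaths_supported L w : In w (allPaths L) -> supported_on L w.
Proof.
  revert w; induction L as [|e l IH]; simpl; intros w Hw.
  - destruct Hw as [<-|[]]. intros i t H; discriminate.
  - apply in_flat_map in Hw as [w0 [Hw0 Hw]]. intros i t H.
    assert (Hu : forall b, upd w0 e b i t = true -> e = (i, t) \/ In (i, t) l).
    { intros b. unfold upd. destruct e as [a c]; simpl.
      destruct (Nat.eqb_spec i a), (Nat.eqb_spec t c); simpl; intros Hb; subst; auto;
        right; apply (IH w0 Hw0); auto. }
    simpl in Hw. destruct Hw as [<-|[<-|[]]]; apply (Hu _ H).
Qed.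

Lemma supported_allPaths L w : supported_on L w -> In w (allPaths L).
Proof.
  revert w; induction L as [|e l IH]; simpl; intros w Hw.
  - left. extensionality i. extensionality t. destruct (w i t) eqn:E; auto.
    apply Hw in E. destruct E.
  - apply in_flat_map. exists (upd w e false). split.
    + apply IH. intros i t H. unfold upd in H. destruct e as [a c]; simpl in H.
      destruct (Nat.eqb_spec i a), (Nat.eqb_spec t c); simpl in H; try discriminate;
        (destruct (Hw i t H) as [Heq|]; [inversion Heq; subst; congruence|auto]).
    + assert (Hx : forall b, w (fst e) (snd e) = b -> w = upd (upd w e false) e b).
      { intros b Hb. extensionality i. extensionality t. unfold upd.
        destruct e as [a c]; simpl in *.
        destruct (Nat.eqb_spec i a), (Nat.eqb_spec t c); simpl; subst; auto. }
      simpl. destruct (w (fst e) (snd e)) eqn:E; [left|right; left]; symmetry; apply Hx; auto.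
Qed.

Lemma expect_ext p L f g :
  (forall w, In w (allPaths L) -> f w = g w) -> expect p L f = expect p L g.
Proof. intros H; unfold expect; apply sumL_ext; intros; rewrite H; auto. Qed.

Lemma expect_plus p L f g : expect p L (fun w => f w + g w) = expect p L f + expect p L g.
Proof. unfold expect. rewrite <- sumL_plus. apply sumL_ext; intros; ring. Qed.

Lemma expect_scal p L f k : expect p L (fun w => k * f w) = k * expect p L f.
Proof. unfold expect. rewrite <- sumL_scal. apply sumL_ext; intros; ring. Qed.

Lemma expect_sum {A} p L (F : A -> (nat -> nat -> bool) -> R) J :
  expect p L (fun w => sumL (fun j => F j w) J) = sumL (fun j => expect p L (F j)) J.
Proof.
  unfold expect. rewrite <- sumL_exchange. apply sumL_ext; intros w _.
  rewrite <- sumL_scal. auto.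
Qed.

Lemma expect_mono p L f g :
  (forall e, In e L -> 0 <= p (fst e) (snd e) <= 1) ->
  (forall w, In w (allPaths L) -> f w <= g w) -> expect p L f <= expect p L g.
Proof.
  intros Hp H. unfold expect. apply sumL_le. intros w Hw.
  apply Rmult_le_compat_l; auto. apply prodL_nonneg. intros e He.
  destruct (w (fst e) (snd e)); specialize (Hp e He); lra.
Qed.

Lemma expect_cons p e l f : ~ In e l ->
  expect p (e :: l) f =
  expect p l (fun w => p (fst e) (snd e) * f (upd w e true)
                       + (1 - p (fst e) (snd e)) * f (upd w e false)).
Proof.
  intros Hn. unfold expect. simpl allPaths. rewrite sumL_flat_map.
  apply sumL_ext. intros w Hw. simpl. unfold path_weight; simpl. rewrite !upd_eq.
  assert (Hb : forall b,
    path_weight p l (upd w e b) = path_weight p l w).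
  { intros b. apply prodL_ext. intros a Ha. rewrite upd_neq; auto. intros ->; auto. }
  unfold path_weight in Hb. rewrite !Hb. ring.
Qed.

Lemma expect_const p L k : NoDup L -> expect p L (fun _ => k) = k.
Proof.
  induction L as [|e l IH]; intros Hn.
  - unfold expect, path_weight; simpl. ring.
  - inversion Hn; subst. rewrite expect_cons by auto.
    transitivity (expect p l (fun _ => k)); [apply expect_ext; intros; ring | auto].
Qed.

Lemma expect_indep p L e g : NoDup L -> In e L ->
  (forall w, supported_on L w -> g (upd w e true) = g (upd w e false)) ->
  expect p L (fun w => g w * ind (w (fst e) (snd e))) = p (fst e) (snd e) * expect p L g.
Proof.
  revert g; induction L as [|e0 l IH]; intros g Hn He Hg; [destruct He|].
  inversion Hn; subst. rewrite !expect_cons by auto.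
  destruct (pair_dec e e0) as [<-|Hne].
  - rewrite <- expect_scal. apply expect_ext. intros w Hw. rewrite !upd_eq. simpl.
    rewrite (Hg w); [ring|]. intros i t Hit. right. apply (allPaths_supported l w Hw i t Hit).
  - destruct He as [He|He]; [congruence|].
    set (h := fun w => p (fst e0) (snd e0) * g (upd w e0 true)
                       + (1 - p (fst e0) (snd e0)) * g (upd w e0 false)).
    transitivity (expect p l (fun w => h w * ind (w (fst e) (snd e)))).
    { apply expect_ext. intros w _. unfold h. rewrite !upd_neq by auto. ring. }
    apply IH; auto. intros w Hw. unfold h.
    assert (Hs : forall b, supported_on (e0 :: l) (upd w e0 b)).
    { intros b. apply upd_supported; [now left|]. intros i t Hit. right; auto. }
    rewrite !(upd_comm w e e0), !Hg by auto. reflexivity.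
Qed.

Lemma expect_ind p L e : NoDup L -> In e L ->
  expect p L (fun w => ind (w (fst e) (snd e))) = p (fst e) (snd e).
Proof.
  intros Hn He.
  transitivity (expect p L (fun w => (fun _ => 1) w * ind (w (fst e) (snd e)))).
  { apply expect_ext; intros; simpl; ring. }
  rewrite expect_indep, expect_const; auto. ring.
Qed.

Lemma expect_ind_ind p L e e' : NoDup L -> In e L -> In e' L ->
  expect p L (fun w => ind (w (fst e') (snd e')) * ind (w (fst e) (snd e))) =
  p (fst e) (snd e) * p (fst e') (snd e')
  + (if pair_dec e' e then p (fst e) (snd e) - p (fst e) (snd e) * p (fst e) (snd e) else 0).
Proof.
  intros Hn He He'. destruct (pair_dec e' e) as [<-|Hne].
  - transitivity (expect p L (fun w => ind (w (fst e') (snd e')))).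
    { apply expect_ext; intros w _; destruct (w (fst e') (snd e')); simpl; ring. }
    rewrite expect_ind; auto; ring.
  - rewrite expect_indep, expect_ind; auto; [ring|].
    intros w _. rewrite !upd_neq; auto.
Qed.

(** ** Truncated sums of independent weighted indicators

    For a sub-list [K] of [L] and weights [a] in [0,1], the load
    S = sum_{e in K} a_e 1(e) has mean [load_mean] and variance
    [load_var] <= mean; this yields E[min(S, c)] >= mu - mu/(4d) whenever
    the capacity exceeds the mean by d. *)

Section SecondMoment.
Variable p : nat -> nat -> R.
Variables L K : list (nat * nat).
Variable a : nat * nat -> R.
Hypothesis HnL : NoDup L.
Hypothesis HnK : NoDup K.
Hypothesis HKL : incl K L.

Definition load (w : nat -> nat -> bool) : R :=
  sumL (fun e => a e * ind (w (fst e) (snd e))) K.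
Definition load_mean : R := sumL (fun e => a e * p (fst e) (snd e)) K.
Definition load_var : R :=
  sumL (fun e => a e * a e * (p (fst e) (snd e) - p (fst e) (snd e) * p (fst e) (snd e))) K.

Lemma expect_load : expect p L load = load_mean.
Proof.
  unfold load, load_mean. rewrite expect_sum. apply sumL_ext. intros e He.
  rewrite expect_scal, expect_ind; auto.
Qed.

Lemma expect_load_sq :
  expect p L (fun w => load w * load w) = load_mean * load_mean + load_var.
Proof.
  transitivity (expect p L (fun w => sumL (fun e => sumL (fun e' => (a e * a e') *
      (ind (w (fst e') (snd e')) * ind (w (fst e) (snd e)))) K) K)).
  { apply expect_ext. intros w _. unfold load at 1. rewrite <- sumL_scal_r.
    apply sumL_ext. intros e _. unfold load. rewrite <- sumL_scal.
    apply sumL_ext. intros; ring. }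
  rewrite expect_sum.
  transitivity (sumL (fun e => a e * p (fst e) (snd e) * load_mean + a e * a e *
      (p (fst e) (snd e) - p (fst e) (snd e) * p (fst e) (snd e))) K).
  { apply sumL_ext. intros e He. rewrite expect_sum.
    transitivity (sumL (fun e' => a e * p (fst e) (snd e) * (a e' * p (fst e') (snd e')) +
        (if pair_dec e' e then (fun e'' => a e * a e''
           * (p (fst e) (snd e) - p (fst e) (snd e) * p (fst e) (snd e))) e' else 0)) K).
    { apply sumL_ext. intros e' He'. rewrite expect_scal, expect_ind_ind; auto.
      destruct (pair_dec e' e); ring. }
    rewrite sumL_plus, sumL_scal, sum_delta; auto. }
  rewrite sumL_plus, sumL_scal_r. unfold load_var, load_mean. ring.
Qed.

Hypothesis Hp : forall e, In e L -> 0 <= p (fst e) (snd e) <= 1.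
Hypothesis Ha : forall e, In e K -> 0 <= a e <= 1.

Lemma load_mean_nonneg : 0 <= load_mean.
Proof.
  apply sumL_nonneg. intros e He.
  specialize (Hp e (HKL e He)). specialize (Ha e He). apply Rmult_le_pos; lra.
Qed.

Lemma load_var_bounds : 0 <= load_var <= load_mean.
Proof.
  split; [apply sumL_nonneg | apply sumL_le]; intros e He;
    specialize (Hp e (HKL e He)); specialize (Ha e He);
    set (q := p (fst e) (snd e)) in *; set (x := a e) in *.
  - apply Rmult_le_pos; nra.
  - assert (0 <= q - q * q) by nra. assert (x * x <= x) by nra.
    assert (x * x * (q - q * q) <= x * (q - q * q)) by (apply Rmult_le_compat_r; lra).
    assert (0 <= x * (q * q)) by (apply Rmult_le_pos; nra). nra.
Qed.

Lemma min_quadratic_minorant (S c m : R) :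
  m < c -> S - (S - m) * (S - m) / (4 * (c - m)) <= Rmin S c.
Proof.
  intros H. set (X := (S - m) * (S - m) / (4 * (c - m))).
  assert (HX : X * (4 * (c - m)) = (S - m) * (S - m)) by (unfold X; field; lra).
  assert (Hsq : 0 <= (S - m - 2 * (c - m)) * (S - m - 2 * (c - m))) by apply Rle_0_sqr.
  assert (H3 : 0 <= (S - m) * (S - m)) by apply Rle_0_sqr.
  assert (X >= 0) by (destruct (Rlt_or_le X 0); [nra|lra]).
  assert (X >= S - c) by (destruct (Rlt_or_le X (S - c)); [nra|lra]).
  unfold Rmin; destruct (Rle_dec S c); lra.
Qed.

Lemma expect_truncated_load c d : 0 < d -> d <= c - load_mean ->
  load_mean - load_mean / (4 * d) <= expect p L (fun w => Rmin (load w) c).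
Proof.
  intros Hd Hdc. pose proof load_mean_nonneg. pose proof load_var_bounds.
  set (mu := load_mean) in *. set (k := c - mu).
  assert (HE : expect p L (fun w => load w - (load w - mu) * (load w - mu) / (4 * k))
               = mu - load_var / (4 * k)).
  { transitivity (expect p L (fun w => (1 + 2 * mu / (4 * k)) * load w
        + ((- / (4 * k)) * (load w * load w) + (fun _ => - (mu * mu) / (4 * k)) w))).
    { apply expect_ext; intros w _. field. unfold k; lra. }
    rewrite expect_plus, expect_scal, expect_plus, expect_scal, expect_const,
      expect_load, expect_load_sq; auto.
    unfold mu. field. unfold k, mu in *; lra. }
  assert (Hmono : expect p L (fun w => load w - (load w - mu) * (load w - mu) / (4 * k))
                  <= expect p L (fun w => Rmin (load w) c)).
  { apply expect_mono; auto. intros w _. apply min_quadratic_minorant. unfold k in *; lra. }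
  assert (load_var / (4 * k) <= mu / (4 * d)).
  { unfold Rdiv. apply Rmult_le_compat; try lra.
    - apply Rlt_le, Rinv_0_lt_compat. unfold k; lra.
    - apply Rinv_le_contravar; unfold k; lra. }
  lra.
Qed.

End SecondMoment.

Lemma NoDup_list_prod (l l' : list nat) : NoDup l -> NoDup l' -> NoDup (list_prod l l').
Proof.
  induction 1 as [|x l Hx Hl IH]; intros Hl'; simpl; [constructor|].
  apply NoDup_app; auto.
  - apply NoDup_map_NoDup_ForallPairs; auto. intros u v _ _ Huv; inversion Huv; auto.
  - intros a Ha Hb. apply in_map_iff in Ha as [y [<- _]].
    apply in_prod_iff in Hb as [Hb _]. auto.
Qed.

Lemma edges_NoDup G : NoDup (edges G).
Proof. unfold edges. apply NoDup_filter, NoDup_list_prod; apply seq_NoDup. Qed.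

Lemma In_edges G e : In e (edges G) ->
  (fst e < nI G)%nat /\ (snd e < nT G)%nat /\ E G (fst e) (snd e) = true.
Proof.
  unfold edges. intros H. apply filter_In in H as [H1 H2]. destruct e as [i t].
  apply in_prod_iff in H1 as [Hi Ht]. apply in_seq in Hi, Ht. simpl. repeat split; auto; lia.
Qed.

Lemma prob_bounds G : valid_instance G ->
  forall e, In e (edges G) -> 0 <= prob G (fst e) (snd e) <= 1.
Proof. intros [_ [_ [_ Hv]]] e He. apply In_edges in He as [H1 [H2 H3]]. apply Hv; auto. Qed.

Lemma cmin_le G i : (i < nI G)%nat -> (cmin G <= cap G i)%nat.
Proof.
  intros Hi. unfold cmin. assert (Hin : In i (seq 0 (nI G))) by (apply in_seq; lia).
  destruct (seq 0 (nI G)) as [|i0 l]; [destruct Hin|].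
  assert (Hfold : forall l m0, (fold_left (fun m i => Nat.min m (cap G i)) l m0 <= m0)%nat /\
      forall i, In i l -> (fold_left (fun m i => Nat.min m (cap G i)) l m0 <= cap G i)%nat).
  { induction l0 as [|a l0 IH]; simpl; intros m0; [split; [lia|tauto]|].
    destruct (IH (Nat.min m0 (cap G a))) as [H1 H2]. split; [lia|].
    intros j [<-|Hj]; [lia|auto]. }
  destruct (Hfold l (cap G i0)) as [H1 H2]. destruct Hin as [<-|Hin]; auto.
Qed.

Definition res_edges (G : Instance) (i : nat) : list (nat * nat) :=
  filter (fun e => Nat.eqb (fst e) i) (edges G).

Lemma res_edges_incl G i : incl (res_edges G i) (edges G).
Proof. intros e He. unfold res_edges in He. apply filter_In in He; tauto. Qed.

Lemma res_edges_fst G i e : In e (res_edges G i) -> fst e = i.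
Proof. unfold res_edges; intros He. apply filter_In in He as [_ H]. apply Nat.eqb_eq; auto. Qed.

Lemma res_edges_NoDup G i : NoDup (res_edges G i).
Proof. apply NoDup_filter, edges_NoDup. Qed.

Definition arrives_before (u v : nat * nat) : Prop := (snd u < snd v)%nat.

Lemma StronglySorted_filter {A} (Rel : A -> A -> Prop) (f : A -> bool) l :
  StronglySorted Rel l -> StronglySorted Rel (filter f l).
Proof.
  induction 1 as [|a l _ IH Hf]; simpl; [constructor|].
  destruct (f a); auto. constructor; auto.
  rewrite Forall_forall in *. intros x Hx. apply filter_In in Hx. apply Hf; tauto.
Qed.

Lemma filter_fst_list_prod i k s (B : list nat) :
  filter (fun e : nat * nat => Nat.eqb (fst e) i) (list_prod (seq s k) B) =
  if (Nat.leb s i && Nat.ltb i (s + k))%bool then map (fun t => (i, t)) B else [].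
Proof.
  assert (Hrow : forall s', filter (fun e : nat * nat => Nat.eqb (fst e) i)
      (map (fun t => (s', t)) B) = if Nat.eqb s' i then map (fun t => (i, t)) B else []).
  { intros s'. induction B as [|b B IH]; simpl; [destruct (Nat.eqb s' i); auto|].
    rewrite IH. destruct (Nat.eqb_spec s' i); subst; auto. }
  revert s; induction k; intros s; simpl.
  - destruct (Nat.leb_spec s i), (Nat.ltb_spec i (s + 0)); simpl; auto; lia.
  - rewrite filter_app, Hrow, IHk. replace (S s + k)%nat with (s + S k)%nat by lia.
    destruct (Nat.eqb_spec s i), (Nat.leb_spec s i), (Nat.leb_spec (S s) i),
      (Nat.ltb_spec i (s + S k)); simpl; rewrite ?app_nil_r; auto; lia.
Qed.

Lemma res_edges_sorted G i : StronglySorted arrives_before (res_edges G i).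
Proof.
  unfold res_edges, edges.
  assert (Hcomm : forall (f g : nat * nat -> bool) l,
      filter f (filter g l) = filter g (filter f l)).
  { intros f g l. induction l as [|a l IH]; simpl; auto.
    destruct (f a) eqn:Ef, (g a) eqn:Eg; simpl; rewrite ?Ef, ?Eg, IH; auto. }
  rewrite Hcomm, filter_fst_list_prod. apply StronglySorted_filter.
  destruct (_ && _)%bool; [|constructor].
  generalize 0%nat. induction (nT G) as [|n IH]; intros s; simpl; constructor; auto.
  rewrite Forall_forall. intros x Hx. apply in_map_iff in Hx as [y [<- Hy]].
  apply in_seq in Hy. unfold arrives_before; simpl; lia.
Qed.

Lemma sumL_by_resource G (f : nat * nat -> R) :
  sumL f (edges G) = sumL (fun i => sumL f (res_edges G i)) (seq 0 (nI G)).
Proof.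
  unfold res_edges.
  assert (Hgen : forall l, (forall e, In e l -> (fst e < nI G)%nat) ->
    sumL f l = sumL (fun i => sumL f (filter (fun e => Nat.eqb (fst e) i) l)) (seq 0 (nI G))).
  { induction l as [|a l IH]; simpl; intros H; [rewrite sumL_zero; auto|].
    transitivity (sumL (fun i => (if Nat.eq_dec i (fst a) then (fun _ => f a) i else 0)
        + sumL f (filter (fun e => Nat.eqb (fst e) i) l)) (seq 0 (nI G))).
    - rewrite sumL_plus, sum_delta, IH; auto. apply seq_NoDup. apply in_seq.
      specialize (H a (or_introl eq_refl)). lia.
    - apply sumL_ext. intros i _.
      destruct (Nat.eq_dec i (fst a)), (Nat.eqb_spec (fst a) i); simpl; subst;
        try congruence; ring. }
  apply Hgen. intros e He. apply In_edges in He; tauto.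
Qed.

(** ** Upper bound: OPT(PBP) <= OPT(LP) *)

(** A non-anticipating decision on edge [e] is independent of the outcome of [e]. *)
Lemma expect_decision_times_outcome G x :
  PBP_feasible G x -> forall e, In e (edges G) ->
  expect (prob G) (edges G) (fun w => x w (fst e) (snd e) * ind (w (fst e) (snd e)))
  = prob G (fst e) (snd e) * expect (prob G) (edges G) (fun w => x w (fst e) (snd e)).
Proof.
  intros [_ [_ [_ Hna]]] e He.
  apply (expect_indep _ _ _ (fun w => x w (fst e) (snd e))); auto using edges_NoDup.
  intros w Hw. apply Hna; [apply supported_allPaths, upd_supported; auto ..| auto |].
  intros e' He' Hlt. rewrite !upd_neq; auto; intros ->; lia.
Qed.

Lemma pbp_average_lp_feasible G x : valid_instance G -> PBP_feasible G x ->
  let y := fun i t => expect (prob G) (edges G) (fun w => x w i t) in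
  LP_feasible G y /\ LP_obj G y = PBP_obj G x.
Proof.
  intros Hv Hx y. pose proof (prob_bounds G Hv) as Hp. pose proof (edges_NoDup G) as Hn.
  pose proof (expect_decision_times_outcome G x Hx) as Hind.
  destruct Hx as [Hc [Ha [Hb _]]].
  assert (Hbound : forall (f : _ -> R) k, (forall w, In w (Omega G) -> f w <= k) ->
      expect (prob G) (edges G) f <= k).
  { intros f k Hf. rewrite <- (expect_const (prob G) (edges G) k) by auto.
    apply expect_mono; auto. }
  split; [split; [|split]|].
  - intros i Hi. eapply Rle_trans; [|apply (Hbound _ _ (fun w Hw => Hc w Hw i Hi))].
    rewrite expect_sum. right. apply sumL_ext. intros e He.
    apply filter_In in He. rewrite Hind; tauto.
  - intros t Ht. unfold y. rewrite <- (expect_sum _ _ (fun e w => x w (fst e) (snd e))).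
    apply Hbound. intros w Hw. apply Ha; auto.
  - intros e He. unfold y. split.
    + rewrite <- (expect_const (prob G) (edges G) 0) by auto. apply expect_mono; auto.
      intros w Hw. apply (Hb w Hw e He).
    + apply Hbound. intros w Hw. apply (Hb w Hw e He).
  - unfold PBP_obj, LP_obj.
    change (sumL (fun w => path_prob G w * ?F w) (Omega G)) with (expect (prob G) (edges G) F).
    transitivity (expect (prob G) (edges G) (fun w => sumL (fun e => rew G (fst e)
        * (x w (fst e) (snd e) * ind (w (fst e) (snd e)))) (edges G))).
    + rewrite expect_sum. apply sumL_ext. intros e He.
      rewrite expect_scal, Hind by auto. unfold y. ring.
    + apply expect_ext. intros w _. apply sumL_ext. intros; ring.
Qed.

(** Serving the amounts [a e] of a resource in arrival order and clipping the
    running total at capacity [c], edge [e] receives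
    min(P_e + a_e, c) - min(P_e, c), where P_e is the realized load of the
    strictly earlier arrivals; these increments telescope. *)

Section Clipping.
Variable a : nat * nat -> R.
Variable w : nat -> nat -> bool.
Variable c : R.

Definition prior_load (l : list (nat * nat)) (e : nat * nat) : R :=
  sumL (fun e' => a e' * ind (w (fst e') (snd e')))
       (filter (fun e' => Nat.ltb (snd e') (snd e)) l).

Lemma clipped_increment_bounds P b : 0 <= b -> 0 <= Rmin (P + b) c - Rmin P c <= b.
Proof. intros Hb. unfold Rmin. destruct (Rle_dec (P + b) c), (Rle_dec P c); lra. Qed.

Lemma clipped_telescope l : StronglySorted arrives_before l -> forall s,
  sumL (fun e => (Rmin (s + prior_load l e + a e) c - Rmin (s + prior_load l e) c)
                 * ind (w (fst e) (snd e))) l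
  = Rmin (s + sumL (fun e => a e * ind (w (fst e) (snd e))) l) c - Rmin s c.
Proof.
  induction 1 as [|e0 l Hs IH Hf]; intros s; simpl; [rewrite Rplus_0_r; ring|].
  rewrite Forall_forall in Hf.
  assert (Hfirst : prior_load (e0 :: l) e0 = 0).
  { unfold prior_load. simpl. rewrite Nat.ltb_irrefl.
    assert (Hnil : filter (fun e' => Nat.ltb (snd e') (snd e0)) l = []).
    { rewrite <- (filter_false l). apply filter_ext_in. intros x Hx.
      apply Nat.ltb_ge. specialize (Hf x Hx). unfold arrives_before in Hf; lia. }
    rewrite Hnil. reflexivity. }
  assert (Hlater : forall e, In e l ->
      prior_load (e0 :: l) e = a e0 * ind (w (fst e0) (snd e0)) + prior_load l e).
  { intros e He. unfold prior_load. simpl.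
    replace (Nat.ltb (snd e0) (snd e)) with true; [reflexivity|].
    symmetry. apply Nat.ltb_lt. apply Hf; auto. }
  rewrite Hfirst.
  rewrite (sumL_ext _ (fun e => (Rmin ((s + a e0 * ind (w (fst e0) (snd e0)))
      + prior_load l e + a e) c - Rmin ((s + a e0 * ind (w (fst e0) (snd e0)))
      + prior_load l e) c) * ind (w (fst e) (snd e))) l)
    by (intros e He; rewrite Hlater, !Rplus_assoc by auto; reflexivity).
  rewrite IH, !Rplus_0_r.
  destruct (w (fst e0) (snd e0)); simpl;
    rewrite ?Rmult_1_r, ?Rmult_0_r, ?Rplus_0_r, ?Rplus_0_l, ?Rplus_assoc; ring.
Qed.
End Clipping.

(** ** Lower bound: the clipped scaled LP policy

    For [q > 1] and an LP solution [y], every edge is offered the amount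
    [(1 - 1/q) y_e], clipped at the capacity of its resource. *)

Lemma inv_bounds q : 1 < q -> 0 < / q < 1.
Proof.
  intros Hq. split; [apply Rinv_0_lt_compat; lra|].
  rewrite <- Rinv_1. apply Rinv_lt_contravar; lra.
Qed.

(** The guarantee of the clipped policy for slack [q]. *)
Definition approx_ratio (q : R) : R := (1 - / (4 * q)) * (1 - / q).

Lemma approx_ratio_pos q : 1 < q -> 0 < approx_ratio q.
Proof.
  intros Hq. pose proof (inv_bounds q Hq). unfold approx_ratio.
  replace (/ (4 * q)) with (/ q / 4) by (field; lra). apply Rmult_lt_0_compat; lra.
Qed.

Section ClippedPolicy.
Variable G : Instance.
Hypothesis Hv : valid_instance G.
Variable q : R.
Hypothesis Hq : 1 < q.
Variable y : nat -> nat -> R.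
Hypothesis Hy : LP_feasible G y.

Definition scaled_lp (e : nat * nat) : R := (1 - / q) * y (fst e) (snd e).

Definition clipped_policy (w : nat -> nat -> bool) (i t : nat) : R :=
  Rmin (prior_load scaled_lp w (res_edges G i) (i, t) + scaled_lp (i, t)) (INR (cap G i))
  - Rmin (prior_load scaled_lp w (res_edges G i) (i, t)) (INR (cap G i)).

Lemma scaled_lp_bounds e : In e (edges G) ->
  0 <= scaled_lp e <= y (fst e) (snd e) /\ y (fst e) (snd e) <= 1.
Proof.
  intros He. pose proof (inv_bounds q Hq). destruct Hy as [_ [_ Hb]].
  specialize (Hb e He). unfold scaled_lp. split; [split|]; nra.
Qed.

Lemma clipped_policy_bounds w e : In e (edges G) ->
  0 <= clipped_policy w (fst e) (snd e) <= scaled_lp e.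
Proof.
  intros He. destruct (scaled_lp_bounds e He) as [[H1 H2] _]. unfold clipped_policy.
  destruct e as [i t]; simpl. apply clipped_increment_bounds; auto.
Qed.

Lemma clipped_consumption w i :
  sumL (fun e => clipped_policy w (fst e) (snd e) * ind (w (fst e) (snd e))) (res_edges G i)
  = Rmin (load (res_edges G i) scaled_lp w) (INR (cap G i)).
Proof.
  transitivity (sumL (fun e =>
      (Rmin (0 + prior_load scaled_lp w (res_edges G i) e + scaled_lp e) (INR (cap G i))
       - Rmin (0 + prior_load scaled_lp w (res_edges G i) e) (INR (cap G i)))
      * ind (w (fst e) (snd e))) (res_edges G i)).
  { apply sumL_ext. intros e He. pose proof (res_edges_fst G i e He) as Hf.
    destruct e as [i' t]. simpl in Hf; subst. unfold clipped_policy; simpl.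
    rewrite !Rplus_0_l. reflexivity. }
  rewrite clipped_telescope by apply res_edges_sorted. rewrite Rplus_0_l. unfold load.
  rewrite (Rmin_left 0) by apply pos_INR. ring.
Qed.

Lemma clipped_policy_feasible : PBP_feasible G clipped_policy.
Proof.
  split; [|split; [|split]].
  - intros w _ i Hi. change (filter (fun e => Nat.eqb (fst e) i) (edges G)) with (res_edges G i).
    rewrite clipped_consumption. apply Rmin_r.
  - intros w _ t Ht. destruct Hy as [_ [Ha _]]. eapply Rle_trans; [|apply (Ha t Ht)].
    apply sumL_le. intros e He. apply filter_In in He as [He _].
    destruct (clipped_policy_bounds w e He). destruct (scaled_lp_bounds e He) as [[? ?] ?]. lra.
  - intros w _ e He.
    destruct (clipped_policy_bounds w e He). destruct (scaled_lp_bounds e He) as [[? ?] ?]. lra.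
  -
    intros w w' _ _ e He Hagree. unfold clipped_policy, prior_load.
    rewrite (sumL_ext (fun e' => scaled_lp e' * ind (w (fst e') (snd e')))
                      (fun e' => scaled_lp e' * ind (w' (fst e') (snd e')))); [reflexivity|].
    intros e' He'. apply filter_In in He' as [He' Hlt]. simpl in Hlt. apply Nat.ltb_lt in Hlt.
    rewrite (Hagree e'); auto. apply (res_edges_incl G (fst e)); auto.
Qed.

Lemma lp_obj_by_resource :
  LP_obj G y = sumL (fun i => rew G i * load_mean (prob G) (res_edges G i)
                                          (fun e => y (fst e) (snd e))) (seq 0 (nI G)).
Proof.
  unfold LP_obj. rewrite sumL_by_resource. apply sumL_ext. intros i _.
  unfold load_mean. rewrite <- sumL_scal.
  apply sumL_ext. intros e He. rewrite (res_edges_fst G i e He). ring.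
Qed.

Lemma clipped_policy_obj_by_resource :
  PBP_obj G clipped_policy =
  sumL (fun i => rew G i * expect (prob G) (edges G)
          (fun w => Rmin (load (res_edges G i) scaled_lp w) (INR (cap G i)))) (seq 0 (nI G)).
Proof.
  unfold PBP_obj.
  change (sumL (fun w => path_prob G w * ?F w) (Omega G)) with (expect (prob G) (edges G) F).
  transitivity (expect (prob G) (edges G) (fun w => sumL (fun i => rew G i
      * Rmin (load (res_edges G i) scaled_lp w) (INR (cap G i))) (seq 0 (nI G)))).
  - apply expect_ext. intros w _. rewrite sumL_by_resource. apply sumL_ext. intros i _.
    rewrite <- clipped_consumption, <- sumL_scal. apply sumL_ext. intros e He.
    rewrite (res_edges_fst G i e He). ring.
  - rewrite expect_sum. apply sumL_ext. intros i _. apply expect_scal.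
Qed.

Hypothesis Hcap : forall i, (i < nI G)%nat -> q * q <= INR (cap G i).

(** Per resource, the slack q between capacity and scaled mean makes the
    truncation lose at most a 1/(4q) fraction. *)
Lemma clipped_resource_bound i : (i < nI G)%nat ->
  approx_ratio q * load_mean (prob G) (res_edges G i) (fun e => y (fst e) (snd e))
  <= expect (prob G) (edges G)
       (fun w => Rmin (load (res_edges G i) scaled_lp w) (INR (cap G i))).
Proof.
  intros Hi. pose proof (inv_bounds q Hq).
  set (T := load_mean (prob G) (res_edges G i) (fun e => y (fst e) (snd e))).
  assert (Hmean : load_mean (prob G) (res_edges G i) scaled_lp = (1 - / q) * T).
  { unfold T, load_mean. rewrite <- sumL_scal. apply sumL_ext; intros; unfold scaled_lp; ring. }
  assert (HT : T <= INR (cap G i)).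
  { destruct Hy as [Hc _]. unfold T, load_mean.
    rewrite (sumL_ext _ (fun e => prob G (fst e) (snd e) * y (fst e) (snd e)))
      by (intros; ring). apply Hc; auto. }
  assert (Hslack : q <= INR (cap G i) - load_mean (prob G) (res_edges G i) scaled_lp).
  { rewrite Hmean. specialize (Hcap i Hi).
    assert (/ q * (q * q) = q) by (field; lra).
    assert (/ q * (q * q) <= / q * INR (cap G i)) by (apply Rmult_le_compat_l; lra).
    assert ((1 - / q) * T <= (1 - / q) * INR (cap G i)) by (apply Rmult_le_compat_l; lra).
    lra. }
  pose proof (expect_truncated_load (prob G) (edges G) (res_edges G i) scaled_lp
    (edges_NoDup G) (res_edges_NoDup G i) (res_edges_incl G i) (prob_bounds G Hv)) as Hbound.
  assert (Ha : forall e, In e (res_edges G i) -> 0 <= scaled_lp e <= 1).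
  { intros e He. destruct (scaled_lp_bounds e (res_edges_incl G i e He)). lra. }
  specialize (Hbound Ha (INR (cap G i)) q ltac:(lra) Hslack).
  rewrite Hmean in Hbound. eapply Rle_trans; [|apply Hbound].
  right. unfold approx_ratio. field. lra.
Qed.

Lemma clipped_policy_obj : approx_ratio q * LP_obj G y <= PBP_obj G clipped_policy.
Proof.
  rewrite lp_obj_by_resource, clipped_policy_obj_by_resource, <- sumL_scal.
  apply sumL_le. intros i Hi. apply in_seq in Hi.
  destruct Hv as [_ [Hr _]]. specialize (Hr i ltac:(lia)).
  pose proof (clipped_resource_bound i ltac:(lia)).
  replace (approx_ratio q * (rew G i * load_mean (prob G) (res_edges G i)
             (fun e => y (fst e) (snd e))))
    with (rew G i * (approx_ratio q * load_mean (prob G) (res_edges G i)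
             (fun e => y (fst e) (snd e)))) by ring.
  apply Rmult_le_compat_l; lra.
Qed.

End ClippedPolicy.

Lemma lub_le_of_incl (A B : R -> Prop) a b :
  is_lub A a -> is_lub B b -> (forall v, B v -> A v) -> b <= a.
Proof. intros [Ha _] [_ Hb] Hincl. apply Hb. intros v Hv. apply Ha, Hincl, Hv. Qed.

Lemma lub_scaled_le (A B : R -> Prop) a b F : 0 < F ->
  is_lub A a -> is_lub B b -> (forall u, A u -> exists v, B v /\ F * u <= v) -> F * a <= b.
Proof.
  intros HF [_ Ha] [Hb _] Hdom.
  assert (a <= b / F).
  { apply Ha. intros u Hu. destruct (Hdom u Hu) as [v [Hv Huv]].
    apply Rmult_le_reg_l with F; auto. specialize (Hb v Hv).
    replace (F * (b / F)) with b by (field; lra). lra. }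
  apply Rmult_le_reg_r with (/ F); [apply Rinv_0_lt_compat; auto|].
  replace (F * a * / F) with a by (field; lra).
  replace (b * / F) with (b / F) by reflexivity. auto.
Qed.

Lemma OPT_LP_nonneg G v : OPT_LP G v -> 0 <= v.
Proof.
  intros [Hub _]. apply Hub. exists (fun _ _ => 0). split; [split; [|split]|].
  - intros i _. rewrite (sumL_ext _ (fun _ => 0)) by (intros; ring).
    rewrite sumL_zero. apply pos_INR.
  - intros t _. rewrite sumL_zero. lra.
  - intros; lra.
  - unfold LP_obj. rewrite (sumL_ext _ (fun _ => 0)) by (intros; ring).
    symmetry. apply sumL_zero.
Qed.

(** With q = sqrt c, the guarantee (1 - 1/(4q)) (1 - 1/q) is at least
    1 - 2 sqrt(ln c / c): for c >= 2 we have ln c > 1/2, so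
    2 sqrt(ln c / c) = 2 sqrt(ln c) / q >= (5/4)/q, which exceeds the loss
    1/q + 1/(4q) - 1/(4q^2). *)
Lemma approx_ratio_sqrt_ge c : 2 <= c ->
  1 - 2 * sqrt (ln c / c) <= approx_ratio (sqrt c).
Proof.
  intros Hc. set (q := sqrt c). set (s := sqrt (ln c / c)).
  assert (Hqq : q * q = c) by (apply sqrt_sqrt; lra).
  assert (Hq0 : 0 <= q) by apply sqrt_pos.
  assert (Hq1 : 1 < q) by nra.
  assert (Hln : / 2 < ln c).
  { pose proof ln_lt_2. destruct (Rle_lt_or_eq_dec 2 c Hc) as [Hlt|<-]; auto.
    pose proof (ln_increasing 2 c ltac:(lra) Hlt). lra. }
  assert (Hss : s * s = ln c / c).
  { apply sqrt_sqrt. unfold Rdiv. apply Rmult_le_pos; [lra|].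
    apply Rlt_le, Rinv_0_lt_compat; lra. }
  assert (Hs0 : 0 <= s) by apply sqrt_pos.
  assert (Hsq : (s * q) * (s * q) = ln c).
  { replace ((s * q) * (s * q)) with ((s * s) * (q * q)) by ring.
    rewrite Hss, Hqq. field. lra. }
  assert (Hsq58 : 5 / 8 <= s * q).
  { assert (0 <= s * q) by (apply Rmult_le_pos; lra). nra. }
  assert (Hiq : q * / q = 1) by (field; lra).
  assert (Hiq0 : 0 < / q) by (apply Rinv_0_lt_compat; lra).
  assert (Hloss : 5 / 4 * / q <= 2 * s).
  { replace s with ((s * q) * / q) by (field; lra). nra. }
  unfold approx_ratio. fold q s.
  replace (/ (4 * q)) with (/ q / 4) by (field; lra).
  assert (/ q < 1) by nra. nra.
Qed.

Theorem theorem3 :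
  exists C : R, 0 < C /\
  forall (G : Instance), valid_instance G -> (2 <= cmin G)%nat ->
  forall vLP vPBP : R, OPT_LP G vLP -> OPT_PBP G vPBP ->
    vLP * (1 - C * sqrt (ln (INR (cmin G)) / INR (cmin G))) <= vPBP /\
    vPBP <= vLP.
Proof.
  exists 2. split; [lra|]. intros G Hv Hc vLP vPBP HLP HPBP. split.
  - set (c := INR (cmin G)). set (q := sqrt c).
    assert (Hc2 : 2 <= c) by (apply (le_INR 2); auto).
    assert (Hq : 1 < q) by (rewrite <- sqrt_1; apply sqrt_lt_1; lra).
    assert (Hcap : forall i, (i < nI G)%nat -> q * q <= INR (cap G i)).
    { intros i Hi. unfold q. rewrite sqrt_sqrt by lra. apply le_INR, cmin_le; auto. }
    assert (Hlower : approx_ratio q * vLP <= vPBP).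
    { apply (lub_scaled_le _ _ _ _ _ (approx_ratio_pos q Hq) HLP HPBP). intros u [y [Hy ->]].
      exists (PBP_obj G (clipped_policy G q y)). split.
      - exists (clipped_policy G q y). split; auto. apply clipped_policy_feasible; auto.
      - apply clipped_policy_obj; auto. }
    pose proof (approx_ratio_sqrt_ge c Hc2) as Hratio. fold q in Hratio.
    pose proof (OPT_LP_nonneg G vLP HLP). nra.
  - apply (lub_le_of_incl _ _ _ _ HLP HPBP). intros v [x [Hx ->]].
    destruct (pbp_average_lp_feasible G x Hv Hx) as [Hy Hobj].
    eexists. split; [exact Hy | symmetry; exact Hobj].
Qed.
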